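(* The assignment $H_3\mapsto E^2$, $H_1\mapsto\tilde B E$, $C_{18}\mapsto \mathrm{diag}(e^{-7i\pi/9},e^{2i\pi/9},e^{5i\pi/9})$, $C_6\mapsto\mathrm{diag}(e^{i\pi/3},-1,e^{2i\pi/3})$ extends to a group isomorphism $g:Fr(162\times 4)\to D(18,1,1;2,1,1)$. (In terms of generators, $g(C_{18})=F^2(E^2FEF^{-1})^3$ and $g(C_6)=E\,g(C_{18})E^{-2}g(C_{18})^8E^{-2}g(C_{18})^3$.) In particular $Fr(162\times 4)\cong D(18,1,1;2,1,1)$.
   Context: Let $\omega=e^{2i\pi/3}$, $J$ the $3\times3$ antidiagonal matrix with antidiagonal entries $1$. $G_1=\mathrm{diag}(e^{7i\pi/9},-e^{4i\pi/9},-e^{7i\pi/9})$, $G_2=\begin{pmatrix}-\tfrac12 e^{4i\pi/9}&\tfrac{1}{\sqrt2}e^{7i\pi/9}&\tfrac12 e^{4i\pi/9}\\ \tfrac{1}{\sqrt2}e^{7i\pi/9}&0&\tfrac{1}{\sqrt2}e^{7i\pi/9}\\ \tfrac12 e^{4i\pi/9}&\tfrac{1}{\sqrt2}e^{7i\pi/9}&-\tfrac12 e^{4i\pi/9}\end{pmatrix}$, $FUM=-\omega J$, $Fr(162\times 4)=\langle G_1,G_2,FUM\rangle\subset SU(3)$. Let $A=G_1G_2^2G_1^{-1}$, $B=G_1G_2^{-2}G_1$, $C_{18}=A(FUM)^3$, $C_6=B\,G_1(FUM)^3G_1^{-1}$, $H_1=\begin{pmatrix}-\frac12&-\frac1{\sqrt2}&-\frac12\\-\frac1{\sqrt2}&0&\frac1{\sqrt2}\\-\frac12&\frac1{\sqrt2}&-\frac12\end{pmatrix}$,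 $H_3=\begin{pmatrix}\frac12&\frac1{\sqrt2}&-\frac12\\\frac1{\sqrt2}&0&\frac1{\sqrt2}\\\frac12&-\frac1{\sqrt2}&-\frac12\end{pmatrix}$; $C_6,C_{18},H_1,H_3$ generate $Fr(162\times4)$. $D(18,1,1;2,1,1)=\langle F,E,\tilde B\rangle\subset SU(3)$ with $F=\mathrm{diag}(e^{i\pi/9},e^{i\pi/9},e^{-2i\pi/9})$, $E=\begin{pmatrix}0&1&0\\0&0&1\\1&0&0\end{pmatrix}$, $\tilde B=\begin{pmatrix}-1&0&0\\0&0&-1\\0&-1&0\end{pmatrix}$. *)

From HB Require Import structures.
From mathcomp Require Import all_boot all_order all_algebra all_field.
Set Implicit Arguments. Unset Strict Implicit. Unset Printing Implicit Defensive.
Import Order.TTheory GRing.Theory Num.Theory.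
Local Open Scope ring_scope.

Notation M3 := 'M[algC]_3.

Definition mx3 (a b c d e f g h k : algC) : M3 :=
  \matrix_(i < 3, j < 3)
    nth 0 (nth [::] [:: [:: a; b; c]; [:: d; e; f]; [:: g; h; k]] i) j.

Definition diag3 (a b c : algC) : M3 := mx3 a 0 0 0 b 0 0 0 c.

(* zeta = e^{i pi/9}: the 9th root of -1 of minimal nonnegative argument *)
Definition zeta : algC := 9.-root (-1).
Definition ez (k : int) : algC := zeta ^ k.
Definition s2 : algC := sqrtC 2.
Definition omega : algC := ez 6.

Definition Jmx : M3 := mx3 0 0 1 0 1 0 1 0 0.

Definition G1 : M3 := diag3 (ez 7) (- ez 4) (- ez 7).
Definition G2 : M3 :=
  mx3 (- (ez 4 / 2)) (ez 7 / s2) (ez 4 / 2)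
      (ez 7 / s2)    0           (ez 7 / s2)
      (ez 4 / 2)     (ez 7 / s2) (- (ez 4 / 2)).
Definition FUM : M3 := - (omega *: Jmx).

Definition Amx : M3 := G1 * G2 ^+ 2 * G1^-1.
Definition Bmx : M3 := G1 * (G2 ^+ 2)^-1 * G1.
Definition C18 : M3 := Amx * FUM ^+ 3.
Definition C6 : M3 := Bmx * G1 * FUM ^+ 3 * G1^-1.
Definition H1 : M3 :=
  mx3 (- (1/2)) (- s2^-1) (- (1/2))
      (- s2^-1) 0 s2^-1
      (- (1/2)) s2^-1 (- (1/2)).
Definition H3 : M3 :=
  mx3 (1/2) s2^-1 (- (1/2))
      s2^-1 0 s2^-1
      (1/2) (- s2^-1) (- (1/2)).

Definition Fmx : M3 := diag3 (ez 1) (ez 1) (ez (-2)).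
Definition Emx : M3 := mx3 0 1 0 0 0 1 1 0 0.
Definition Btil : M3 := mx3 (-1) 0 0 0 0 (-1) 0 (-1) 0.

Inductive gen (S : seq M3) : M3 -> Prop :=
| gen_one : gen S 1
| gen_mul x y : x \in S -> gen S y -> gen S (x * y)
| gen_mulV x y : x \in S -> gen S y -> gen S (x^-1 * y).

Definition Fr162x4 : seq M3 := [:: G1; G2; FUM].
Definition D18 : seq M3 := [:: Fmx; Emx; Btil].

Definition gC18 : M3 := diag3 (ez (-7)) (ez 2) (ez 5).
Definition gC6 : M3 := diag3 (ez 3) (-1) (ez 6).

(* Let ζ = e^{iπ/9}.  Conjugation by the explicit matrix [Pm] (with inverse
   [Qm]) sends G1, G2, FUM -- and hence every element of Fr = ⟨G1,G2,FUM⟩ --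
   to monomial matrices whose nonzero entries are powers of ζ.  Such a matrix
   is encoded by a "code" (σ, a): row i carries ζ^{a i} in column σ i, and
   products of matrices become compositions of codes, so every identity
   between explicit words is settled by evaluating codes.  Doing this for
   the generators shows that Pm·Fr·Qm is exactly D = ⟨F, E, B̃⟩.

   All codes met here are "balanced": their exponents agree modulo 3.  On
   balanced monomial matrices χ(M) = (nonzero entry of row 0)^6 is a
   multiplicative cube root of unity, so the twist M ↦ χ(M)^2·M is a
   multiplicative map of order 3 which preserves D (ζ^6·1 = F^6).  The
   isomorphism is g(x) = twist(Pm·x·Qm): it is a homomorphism into D, it is
   injective and surjective because twist∘twist∘twist is the identity, and
   its values on H1, H3, C18, C6, like the two word identities for gC18 and
   gC6, are obtained by evaluating codes. *)
From HB Require Import structures.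
From mathcomp Require Import all_boot all_order all_algebra all_field.
From mathcomp Require Import ring.
Set Implicit Arguments. Unset Strict Implicit. Unset Printing Implicit Defensive.
Import GRing.Theory Num.Theory.
Local Open Scope ring_scope.

Lemma mx_rinv (R : comUnitRingType) n (A B : 'M[R]_n.+1) :
  A * B = 1 -> A \is a GRing.unit /\ A^-1 = B.
Proof.
move=> AB1; have [uA _] := mulmx1_unit AB1.
by split=> //; rewrite -[B](mulKr uA) AB1 mulr1.
Qed.

Section Twist.
Variables (R : comNzRingType) (n : nat).
Implicit Types M N : 'M[R]_n.+1.

Definition chi M : R := \sum_(j < n.+1) M 0 j ^+ 6.
Definition twist M : 'M[R]_n.+1 := chi M ^+ 2 *: M.

Lemma chiZ c M : chi (c *: M) = c ^+ 6 * chi M.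
Proof. by rewrite /chi mulr_sumr; apply: eq_bigr => j _; rewrite mxE exprMn. Qed.

Lemma chi_twist M : chi M ^+ 3 = 1 -> chi (twist M) = chi M.
Proof.
move=> chi3; rewrite /twist chiZ -exprM (_ : (2 * 6 = 3 * 4)%N) //.
by rewrite exprM chi3 expr1n mul1r.
Qed.

Lemma twistK3 M : chi M ^+ 3 = 1 -> twist (twist (twist M)) = M.
Proof.
move=> chi3; have chi3' : chi (twist M) ^+ 3 = 1 by rewrite chi_twist.
have twist2 : twist (twist M) = chi M ^+ 4 *: M.
  by rewrite {1}/twist chi_twist // /twist scalerA -exprD.
rewrite {1}/twist !chi_twist // twist2 scalerA -exprD.
by rewrite (_ : (2 + 4 = 3 * 2)%N) // exprM chi3 expr1n scale1r.
Qed.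

Lemma twistM M N : chi (M * N) = chi M * chi N ->
  twist (M * N) = twist M * twist N.
Proof.
by move=> chiM; rewrite /twist chiM -scalerAl -scalerAr scalerA exprMn.
Qed.
End Twist.

Section MonomialCodes.
Variables (R : comNzRingType) (z : R).
Hypothesis z18 : z ^+ 18 = 1.

Definition mcode := ((nat -> nat) * (nat -> nat))%type.

Definition code (s0 s1 s2 a0 a1 a2 : nat) : mcode :=
  (fun i => match i with 0 => s0 | 1 => s1 | _ => s2 end,
   fun i => match i with 0 => a0 | 1 => a1 | _ => a2 end).

Definition monomx (m : mcode) : 'M[R]_3 :=
  \matrix_(i < 3, j < 3) if (j : nat) == m.1 i then z ^+ m.2 i else 0.

Definition mcomp (m n : mcode) : mcode :=
  (fun i => n.1 (m.1 i), fun i => (m.2 i + n.2 (m.1 i))%N).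

(* σ maps {0,1,2} into itself, so that each row has exactly one entry. *)
Definition maps3 (s : nat -> nat) := [&& s 0 < 3, s 1 < 3 & s 2 < 3]%N.

Definition code_eq (m n : mcode) :=
  [&& m.1 0 == n.1 0, m.1 1 == n.1 1, m.1 2 == n.1 2,
      m.2 0 %% 18 == n.2 0 %% 18, m.2 1 %% 18 == n.2 1 %% 18
    & m.2 2 %% 18 == n.2 2 %% 18]%N.

Definition balanced (a : nat -> nat) :=
  ((a 1 %% 3 == a 0 %% 3) && (a 2 %% 3 == a 0 %% 3))%N.
(* The codes of all elements of D(18,1,1;2,1,1). *)
Definition good (m : mcode) := maps3 m.1 && balanced m.2.

Lemma maps3P s i : maps3 s -> (i < 3)%N -> (s i < 3)%N.
Proof. by case/and3P; case: i => [|[|[|i]]]. Qed.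

Lemma balancedP a i : balanced a -> (i < 3)%N -> (a i %% 3 = a 0 %% 3)%N.
Proof. by case/andP => /eqP ? /eqP ?; case: i => [|[|[|i]]]. Qed.

Lemma monomxM m n : maps3 m.1 -> monomx m * monomx n = monomx (mcomp m n).
Proof.
move=> vm; apply/matrixP => i j; rewrite !mxE.
rewrite (bigD1 (Ordinal (maps3P vm (ltn_ord i)))) //= big1 ?addr0; last first.
  move=> k /negbTE Hk; rewrite !mxE.
  case: eqP => [Ek|]; last by rewrite mul0r.
  by move: Hk; rewrite -val_eqE /= Ek eqxx.
by rewrite !mxE eqxx; case: eqP; rewrite ?mulr0 // exprD.
Qed.

(* Codes are decided up to code_eq, which is computable. *)
Lemma monomx_eq m n : code_eq m n -> monomx m = monomx n.
Proof.
case/and3P => /eqP e0 /eqP e1 /and4P [/eqP e2 /eqP a0 /eqP a1 /eqP a2].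
apply/matrixP => i j; rewrite !mxE.
case: i => [[|[|[|i]]] Hi] //=; rewrite -?e0 -?e1 -?e2;
  by rewrite -(expr_mod _ z18) ?a0 ?a1 ?a2 expr_mod.
Qed.

Lemma monomx1 : monomx (code 0 1 2 0 0 0) = 1.
Proof.
apply/matrixP => i j; rewrite !mxE.
by case: i => [[|[|[|i]]] Hi]; case: j => [[|[|[|j]]] Hj].
Qed.

Lemma monomxZ k m : z ^+ k *: monomx m = monomx (m.1, fun i => (k + m.2 i)%N).
Proof. by apply/matrixP => i j; rewrite !mxE; case: eqP; rewrite ?mulr0 ?exprD. Qed.

Lemma good_comp m n : good m -> good n -> good (mcomp m n).
Proof.
case/andP => vm bm /andP [vn bn]; apply/andP; split.
  by apply/and3P; split => /=; apply: (maps3P vn); apply: (maps3P vm).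
have Hk k : (k < 3)%N -> ((m.2 k + n.2 (m.1 k)) %% 3 = (m.2 0 + n.2 0) %% 3)%N.
  move=> Hk; rewrite -modnDm (balancedP bm Hk) (balancedP bn (maps3P vm Hk)).
  by rewrite modnDm.
by apply/andP; split; rewrite /= Hk // Hk.
Qed.

Lemma expz6_mod3 x y : (x %% 3 = y %% 3)%N -> z ^+ (6 * x) = z ^+ (6 * y).
Proof.
move=> H; rewrite -(expr_mod _ z18) -[in RHS](expr_mod _ z18).
by rewrite (_ : 18 = 6 * 3)%N // -!muln_modr H.
Qed.

Lemma chi_monomx m : (m.1 0 < 3)%N -> chi (monomx m) = z ^+ (6 * m.2 0).
Proof.
move=> v0; rewrite /chi (bigD1 (Ordinal v0)) //= big1 ?addr0; last first.
  move=> k /negbTE Hk; rewrite !mxE.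
  case: eqP => [Ek|]; last by rewrite expr0n.
  by move: Hk; rewrite -val_eqE /= Ek eqxx.
by rewrite !mxE eqxx -exprM mulnC.
Qed.

Lemma chi_monomx_cube m : (m.1 0 < 3)%N -> chi (monomx m) ^+ 3 = 1.
Proof. by move=> v0; rewrite chi_monomx // -exprM mulnAC exprM z18 expr1n. Qed.

(* On good codes χ is multiplicative, as a 0 ≡ a i (mod 3) for every i. *)
Lemma chi_comp m n : good m -> good n ->
  chi (monomx m * monomx n) = chi (monomx m) * chi (monomx n).
Proof.
move=> gm gn; have /andP [vm _] := gm; have /andP [vn bn] := gn.
rewrite monomxM // !chi_monomx ?(maps3P vn) ?(maps3P vm) //=.
by rewrite mulnDr exprD (expz6_mod3 (balancedP bn (maps3P vm _))).
Qed.

Lemma twist_monomx m : (m.1 0 < 3)%N ->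
  twist (monomx m) = monomx (m.1, fun i => (12 * m.2 0 + m.2 i)%N).
Proof. by move=> v0; rewrite /twist chi_monomx // -exprM monomxZ mulnAC. Qed.
End MonomialCodes.

Lemma mx3_mul (a b c d e f g h k a' b' c' d' e' f' g' h' k' : algC) :
  mx3 a b c d e f g h k * mx3 a' b' c' d' e' f' g' h' k' =
  mx3 (a*a'+b*d'+c*g') (a*b'+b*e'+c*h') (a*c'+b*f'+c*k')
      (d*a'+e*d'+f*g') (d*b'+e*e'+f*h') (d*c'+e*f'+f*k')
      (g*a'+h*d'+k*g') (g*b'+h*e'+k*h') (g*c'+h*f'+k*k').
Proof.
apply/matrixP => i j; rewrite !mxE !big_ord_recr big_ord0 /= !mxE add0r.
by case: i => [[|[|[|i]]] Hi]; case: j => [[|[|[|j]]] Hj].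
Qed.

Lemma mx3_one : 1 = mx3 1 0 0 0 1 0 0 0 1 :> M3.
Proof.
apply/matrixP => i j; rewrite !mxE.
by case: i => [[|[|[|i]]] Hi]; case: j => [[|[|[|j]]] Hj].
Qed.

Lemma mx3_scale c a b d e f g h k l :
  c *: mx3 a b d e f g h k l =
  mx3 (c*a) (c*b) (c*d) (c*e) (c*f) (c*g) (c*h) (c*k) (c * l).
Proof.
apply/matrixP => i j; rewrite !mxE.
by case: i => [[|[|[|i]]] Hi]; case: j => [[|[|[|j]]] Hj].
Qed.

Lemma mx3_opp a b d e f g h k l :
  - mx3 a b d e f g h k l = mx3 (-a) (-b) (-d) (-e) (-f) (-g) (-h) (-k) (-l).
Proof.
apply/matrixP => i j; rewrite !mxE.
by case: i => [[|[|[|i]]] Hi]; case: j => [[|[|[|j]]] Hj].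
Qed.

Lemma zeta9 : zeta ^+ 9 = -1.
Proof. exact: (@rootCK _ 9). Qed.

Lemma zeta18 : zeta ^+ 18 = 1.
Proof. by rewrite (_ : 18 = 9 * 2)%N // exprM zeta9 sqrrN expr1n. Qed.

Lemma sqrt2_sq : s2 ^+ 2 = 2.
Proof. exact: sqrtCK. Qed.

Lemma sqrt2_neq0 : s2 != 0.
Proof. by rewrite /s2 sqrtC_eq0 pnatr_eq0. Qed.

Lemma ez_nat (n : nat) : ez n%:R = zeta ^+ n.
Proof. by rewrite /ez natz exprnP. Qed.

Lemma ez_opp (n : nat) : (n <= 18)%N -> ez (- n%:R) = zeta ^+ (18 - n).
Proof.
move=> Hn; rewrite /ez natz -exprnN; apply: mulr1_eq.
by rewrite -exprD subnKC // zeta18.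
Qed.

Notation mon := (monomx zeta).

Lemma mon_eq m n : code_eq m n -> mon m = mon n.
Proof. by move=> e; apply: (monomx_eq zeta18 e). Qed.

Lemma mon_mx3 m : mon m =
  mx3 (if 0%N == m.1 0 then zeta ^+ m.2 0 else 0)
      (if 1%N == m.1 0 then zeta ^+ m.2 0 else 0)
      (if 2%N == m.1 0 then zeta ^+ m.2 0 else 0)
      (if 0%N == m.1 1 then zeta ^+ m.2 1 else 0)
      (if 1%N == m.1 1 then zeta ^+ m.2 1 else 0)
      (if 2%N == m.1 1 then zeta ^+ m.2 1 else 0)
      (if 0%N == m.1 2 then zeta ^+ m.2 2 else 0)
      (if 1%N == m.1 2 then zeta ^+ m.2 2 else 0)
      (if 2%N == m.1 2 then zeta ^+ m.2 2 else 0).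
Proof.
apply/matrixP => i j; rewrite !mxE.
by case: i => [[|[|[|i]]] Hi]; case: j => [[|[|[|j]]] Hj].
Qed.

Ltac mon_compute :=
  rewrite ?exprS ?expr0 ?mulr1 ?monomxM //; apply: mon_eq; vm_compute; reflexivity.

Lemma mon_rinv m m' : maps3 m.1 ->
  code_eq (mcomp m m') (code 0 1 2 0 0 0) ->
  mon m \is a GRing.unit /\ (mon m)^-1 = mon m'.
Proof.
move=> v e; apply: mx_rinv.
by rewrite monomxM // -(monomx1 zeta); apply: mon_eq.
Qed.

Lemma mon_unit m m' : maps3 m.1 ->
  code_eq (mcomp m m') (code 0 1 2 0 0 0) -> mon m \is a GRing.unit.
Proof. by move=> v e; case: (mon_rinv v e). Qed.

Lemma mon_inv m m' : maps3 m.1 ->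
  code_eq (mcomp m m') (code 0 1 2 0 0 0) -> (mon m)^-1 = mon m'.
Proof. by move=> v e; case: (mon_rinv v e). Qed.

Definition cF := code 0 1 2 1 1 16.
Definition cE := code 1 2 0 0 0 0.
Definition cB := code 0 2 1 9 9 9.
Definition cFi := code 0 1 2 17 17 2.
Definition cEi := code 2 0 1 0 0 0.

Lemma F_mon : Fmx = mon cF.
Proof. by rewrite /Fmx /diag3 mon_mx3 /= (ez_nat 1) (@ez_opp 2). Qed.
Lemma E_mon : Emx = mon cE.
Proof. by rewrite /Emx mon_mx3 /= expr0. Qed.
Lemma B_mon : Btil = mon cB.
Proof. by rewrite /Btil mon_mx3 /= zeta9. Qed.
Lemma Fi_mon : Fmx^-1 = mon cFi.
Proof. by rewrite F_mon; apply: mon_inv. Qed.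
Lemma Ei_mon : Emx^-1 = mon cEi.
Proof. by rewrite E_mon; apply: mon_inv. Qed.
Lemma Bi_mon : Btil^-1 = mon cB.
Proof. by rewrite B_mon; apply: mon_inv. Qed.

Lemma gC18_mon : gC18 = mon (code 0 1 2 11 2 5).
Proof. by rewrite /gC18 /diag3 mon_mx3 /= (@ez_opp 7) // (ez_nat 2) (ez_nat 5). Qed.
Lemma gC6_mon : gC6 = mon (code 0 1 2 3 9 6).
Proof. by rewrite /gC6 /diag3 mon_mx3 /= (ez_nat 3) (ez_nat 6) zeta9. Qed.

Section Generated.
Variable S : seq M3.

Lemma gen_mulr x y : gen S x -> gen S y -> gen S (x * y).
Proof.
elim=> [|a b Ha _ IH|a b Ha _ IH] Hy; first by rewrite mul1r.
  by rewrite -mulrA; apply: gen_mul => //; apply: IH.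
by rewrite -mulrA; apply: gen_mulV => //; apply: IH.
Qed.

Lemma gen_in s : s \in S -> gen S s.
Proof. by move=> Hs; rewrite -[s]mulr1; apply: gen_mul => //; apply: gen_one. Qed.

Lemma gen_inV s : s \in S -> gen S s^-1.
Proof. by move=> Hs; rewrite -[s^-1]mulr1; apply: gen_mulV => //; apply: gen_one. Qed.

Lemma gen_X x k : gen S x -> gen S (x ^+ k).
Proof.
move=> Hx; elim: k => [|k IH]; first by rewrite expr0; apply: gen_one.
by rewrite exprS; apply: gen_mulr.
Qed.

Hypothesis S_unit : forall s, s \in S -> s \is a GRing.unit.

Lemma gen_unit x : gen S x -> x \is a GRing.unit.
Proof.
elim=> [|a b Ha _ IH|a b Ha _ IH]; first exact: unitr1.
  by rewrite unitrMl // S_unit.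
by rewrite unitrMl // unitrV S_unit.
Qed.

Lemma gen_inv x : gen S x -> gen S x^-1.
Proof.
elim=> [|a b Ha Hb IH|a b Ha Hb IH]; first by rewrite invr1; apply: gen_one.
  have [ua ub] := (S_unit Ha, gen_unit Hb).
  by rewrite invrM //; apply: gen_mulr => //; apply: gen_inV.
have [ua ub] := (S_unit Ha, gen_unit Hb).
rewrite invrM ?unitrV // invrK.
by apply: gen_mulr => //; apply: gen_in.
Qed.
End Generated.

Section Conjugation.
Variables P Q : M3.
Hypotheses (PQ : P * Q = 1) (QP : Q * P = 1).

Lemma conjM x y : P * (x * y) * Q = (P * x * Q) * (P * y * Q).
Proof. by rewrite -!mulrA (mulrA Q) QP mul1r. Qed.

Lemma conjK x : Q * (P * x * Q) * P = x.
Proof. by rewrite !mulrA QP mul1r -mulrA QP mulr1. Qed.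

Lemma conj_unit x : P * x * Q \is a GRing.unit -> x \is a GRing.unit.
Proof.
have uP : P \is a GRing.unit by case: (mx_rinv PQ).
have uQ : Q \is a GRing.unit by case: (mx_rinv QP).
by rewrite unitrMl // unitrMr.
Qed.

Lemma conjV x : P * x^-1 * Q = (P * x * Q)^-1.
Proof.
have [ux | nux] := boolP (x \is a GRing.unit); last first.
  by rewrite !invr_out // (contra (@conj_unit x)).

apply/esym/(proj2 (mx_rinv _)).
by rewrite -conjM mulrV // mulr1 PQ.
Qed.

Lemma gen_conj (S T : seq M3) :
  (forall t, t \in T -> t \is a GRing.unit) ->
  (forall s, s \in S -> gen T (P * s * Q)) ->
  forall x, gen S x -> gen T (P * x * Q).
Proof.
move=> T_unit ST x; elim=> [|a b Ha _ IH|a b Ha _ IH].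
- by rewrite mulr1 PQ; apply: gen_one.
- by rewrite conjM; apply: gen_mulr => //; apply: ST.
- by rewrite conjM conjV; apply: gen_mulr => //; apply: gen_inv => //; apply: ST.
Qed.
End Conjugation.

Definition Pm : M3 := mx3 0 s2 0 1 0 (-1) 1 0 1.
Definition Qm : M3 := mx3 0 (1/2) (1/2) (s2^-1) 0 0 0 (-(1/2)) (1/2).

Ltac mx3_field :=
  have := sqrt2_neq0 => ?; congr mx3; field: zeta9 sqrt2_sq;
  rewrite ?pnatr_eq0 ?sqrt2_neq0 //.

Lemma PQ : Pm * Qm = 1.
Proof. by rewrite mx3_mul mx3_one; mx3_field. Qed.

Lemma QP : Qm * Pm = 1.
Proof. by rewrite mx3_mul mx3_one; mx3_field. Qed.

Definition cj (x : M3) : M3 := Pm * x * Qm.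

Definition cG1 := code 0 2 1 13 7 7.
Definition cG2 := code 2 1 0 7 13 7.
Definition cFU := code 0 1 2 15 6 15.
Definition cH1 := code 1 0 2 9 9 9.
Definition cH3 := code 2 0 1 0 0 0.

Lemma cj_G1 : cj G1 = mon cG1.
Proof. by rewrite /cj /G1 /diag3 !mx3_mul mon_mx3 /= !ez_nat; mx3_field. Qed.

Lemma cj_G2 : cj G2 = mon cG2.
Proof. by rewrite /cj /G2 !mx3_mul mon_mx3 /= !ez_nat; mx3_field. Qed.

Lemma cj_FUM : cj FUM = mon cFU.
Proof.
rewrite /cj /FUM /omega /Jmx mx3_scale mx3_opp !mx3_mul mon_mx3 /= !ez_nat.
by mx3_field.
Qed.

Lemma cj_H1 : cj H1 = mon cH1.
Proof. by rewrite /cj /H1 !mx3_mul mon_mx3 /=; mx3_field. Qed.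

Lemma cj_H3 : cj H3 = mon cH3.
Proof. by rewrite /cj /H3 !mx3_mul mon_mx3 /=; mx3_field. Qed.

Lemma cjM x y : cj (x * y) = cj x * cj y.
Proof. by rewrite /cj (conjM QP). Qed.

Lemma cjV x : cj x^-1 = (cj x)^-1.
Proof. by rewrite /cj (conjV PQ QP). Qed.

Lemma cjK x : Qm * cj x * Pm = x.
Proof. by rewrite /cj (conjK QP). Qed.

Lemma cj_conjK w : cj (Qm * w * Pm) = w.
Proof. by rewrite /cj (conjK PQ). Qed.

Lemma cj_C18 : cj C18 = mon (code 0 1 2 5 14 17).
Proof.
rewrite /C18 /Amx !exprS !expr0 !mulr1 !cjM cjV cj_G1 cj_G2 cj_FUM.
by rewrite (@mon_inv _ (code 0 2 1 5 11 11)) //; mon_compute.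
Qed.

Lemma cj_C6 : cj C6 = mon (code 0 1 2 3 9 6).
Proof.
rewrite /C6 /Bmx !exprS !expr0 !mulr1 !cjM !cjV !cjM cj_G1 cj_G2 cj_FUM.
rewrite (@mon_inv _ (code 0 2 1 5 11 11)) // monomxM //.
by rewrite (@mon_inv _ (code 0 1 2 4 10 4)) //; mon_compute.
Qed.

Lemma F_in : Fmx \in D18. Proof. by rewrite !inE eqxx. Qed.
Lemma E_in : Emx \in D18. Proof. by rewrite !inE eqxx orbT. Qed.
Lemma B_in : Btil \in D18. Proof. by rewrite !inE eqxx !orbT. Qed.
Lemma G1_in : G1 \in Fr162x4. Proof. by rewrite !inE eqxx. Qed.
Lemma G2_in : G2 \in Fr162x4. Proof. by rewrite !inE eqxx orbT. Qed.
Lemma FUM_in : FUM \in Fr162x4. Proof. by rewrite !inE eqxx !orbT. Qed.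

Ltac gen_word := repeat apply: gen_mulr; apply: gen_in;
  first [ exact: F_in | exact: E_in | exact: B_in
        | exact: G1_in | exact: G2_in | exact: FUM_in ].

Lemma D18_unit s : s \in D18 -> s \is a GRing.unit.
Proof.
rewrite !inE => /or3P [] /eqP ->.
- by rewrite F_mon (@mon_unit _ cFi).
- by rewrite E_mon (@mon_unit _ cEi).
- by rewrite B_mon (@mon_unit _ cB).
Qed.

Lemma Fr_unit s : s \in Fr162x4 -> s \is a GRing.unit.
Proof.
move=> Hs; apply: (conj_unit PQ QP); move: Hs; rewrite -/(cj s) !inE.
case/or3P => /eqP ->.
- by rewrite cj_G1 (@mon_unit _ (code 0 2 1 5 11 11)).
- by rewrite cj_G2 (@mon_unit _ (code 2 1 0 11 5 11)).
- by rewrite cj_FUM (@mon_unit _ (code 0 1 2 3 12 3)).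
Qed.

Lemma cj_gen_Fr s : s \in Fr162x4 -> gen D18 (cj s).
Proof.
rewrite !inE => /or3P [] /eqP ->.
- have -> : cj G1 = Fmx * Fmx * Btil * Fmx * Fmx.
    by rewrite cj_G1 F_mon B_mon; mon_compute.
  by gen_word.
- have -> : cj G2 = Fmx * Fmx * Emx * Btil * Fmx * Fmx.
    by rewrite cj_G2 F_mon E_mon B_mon; mon_compute.
  by gen_word.
- have -> : cj FUM = Emx * Emx * Fmx * Fmx * Fmx * Emx * Fmx * Fmx * Fmx.
    by rewrite cj_FUM F_mon E_mon; mon_compute.
  by gen_word.
Qed.

Lemma uncj_gen_D s : s \in D18 -> gen Fr162x4 (Qm * s * Pm).
Proof.
have cj_inj x y : cj x = cj y -> x = y by move=> e; rewrite -(cjK x) e cjK.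
rewrite !inE => /or3P [] /eqP ->.
- have -> : Qm * Fmx * Pm = G2 * G2 * G1 * FUM * G1.
    apply: cj_inj; rewrite cj_conjK !cjM cj_G1 cj_G2 cj_FUM F_mon; mon_compute.
  by gen_word.
- have -> : Qm * Emx * Pm = FUM * FUM * G2 * G2 * G2 * G1 * G1 * G1.
    apply: cj_inj; rewrite cj_conjK !cjM cj_G1 cj_G2 cj_FUM E_mon; mon_compute.
  by gen_word.
- have -> : Qm * Btil * Pm = FUM * FUM * FUM * FUM * G1 * G1 * G1.
    apply: cj_inj; rewrite cj_conjK !cjM cj_G1 cj_FUM B_mon; mon_compute.
  by gen_word.
Qed.

Lemma cj_Fr x : gen Fr162x4 x -> gen D18 (cj x).
Proof. exact: (gen_conj PQ QP D18_unit cj_gen_Fr). Qed.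

Lemma uncj_D z : gen D18 z -> gen Fr162x4 (Qm * z * Pm).
Proof. exact: (gen_conj QP PQ Fr_unit uncj_gen_D). Qed.

Lemma D_mon M : gen D18 M -> exists2 m, good m & M = mon m.
Proof.
elim=> [|a b Ha _ [m gm ->]|a b Ha _ [m gm ->]].
- by exists (code 0 1 2 0 0 0) => //; rewrite monomx1.
- move: Ha; rewrite !inE => /or3P [] /eqP ->;
    [exists (mcomp cF m) | exists (mcomp cE m) | exists (mcomp cB m)];
    by rewrite ?F_mon ?E_mon ?B_mon ?monomxM //; apply: good_comp.
- move: Ha; rewrite !inE => /or3P [] /eqP ->;
    [exists (mcomp cFi m) | exists (mcomp cEi m) | exists (mcomp cB m)];
    by rewrite ?Fi_mon ?Ei_mon ?Bi_mon ?monomxM //; apply: good_comp.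
Qed.

Lemma chi_D_cube M : gen D18 M -> chi M ^+ 3 = 1.
Proof.
by case/D_mon => m /andP [vm _] ->; apply: (chi_monomx_cube zeta18); case/and3P: vm.
Qed.

Lemma chi_DM M N : gen D18 M -> gen D18 N -> chi (M * N) = chi M * chi N.
Proof. by case/D_mon => m gm -> /D_mon [n gn ->]; apply: (chi_comp zeta18). Qed.

(* ζ^6 is central in D, and so D is stable under the twist. *)
Lemma F6 : Fmx ^+ 6 = zeta ^+ 6 *: 1.
Proof. by rewrite -(monomx1 zeta) monomxZ F_mon; mon_compute. Qed.

Lemma twist_D M : gen D18 M -> gen D18 (twist M).
Proof.
move=> HM; have [m /andP [vm _] eM] := D_mon HM.
have v0 : (m.1 0 < 3)%N by case/and3P: vm.
have F6k k : (zeta ^+ 6) ^+ k *: 1 = Fmx ^+ 6 ^+ k by rewrite F6 exprZn expr1n.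
rewrite /twist {1}eM chi_monomx // -exprM -mulnA exprM -[M]mul1r scalerAl F6k.
by apply: gen_mulr => //; apply/gen_X/gen_X/gen_in/F_in.
Qed.

Definition isoD (x : M3) : M3 := twist (cj x).

Lemma isoD_D x : gen Fr162x4 x -> gen D18 (isoD x).
Proof. by move=> Hx; apply/twist_D/cj_Fr. Qed.

Lemma isoD_M x y : gen Fr162x4 x -> gen Fr162x4 y ->
  isoD (x * y) = isoD x * isoD y.
Proof. by move=> /cj_Fr Hx /cj_Fr Hy; rewrite /isoD cjM twistM // chi_DM. Qed.

Lemma isoD_inj x y : gen Fr162x4 x -> gen Fr162x4 y -> isoD x = isoD y -> x = y.
Proof.
rewrite /isoD => /cj_Fr Hx /cj_Fr Hy exy.
have cj_xy : cj x = cj y.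
  by rewrite -(twistK3 (chi_D_cube Hx)) -(twistK3 (chi_D_cube Hy)) exy.
by rewrite -(cjK x) cj_xy cjK.
Qed.

Lemma isoD_surj z : gen D18 z -> exists2 x, gen Fr162x4 x & isoD x = z.
Proof.
move=> Hz; exists (Qm * twist (twist z) * Pm); first by apply/uncj_D/twist_D/twist_D.
by rewrite /isoD cj_conjK twistK3 ?chi_D_cube.
Qed.

Ltac twist_compute := rewrite twist_monomx //; mon_compute.

Lemma isoD_values :
  [/\ isoD H3 = Emx ^+ 2, isoD H1 = Btil * Emx, isoD C18 = gC18 & isoD C6 = gC6].
Proof.
split; rewrite /isoD.
- by rewrite cj_H3 E_mon; twist_compute.
- by rewrite cj_H1 E_mon B_mon; twist_compute.
- by rewrite cj_C18 gC18_mon; twist_compute.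
- by rewrite cj_C6 gC6_mon; twist_compute.
Qed.

Lemma gC18_word : gC18 = Fmx ^+ 2 * (Emx ^+ 2 * Fmx * Emx * Fmx^-1) ^+ 3.
Proof. by rewrite gC18_mon Fi_mon F_mon E_mon; mon_compute. Qed.

Lemma gC6_word :
  gC6 = Emx * gC18 * (Emx ^+ 2)^-1 * gC18 ^+ 8 * (Emx ^+ 2)^-1 * gC18 ^+ 3.
Proof.
have E2 : Emx ^+ 2 = mon cEi by rewrite E_mon; mon_compute.
by rewrite gC6_mon gC18_mon E2 (@mon_inv _ cE) // E_mon; mon_compute.
Qed.

Theorem theorem8 :
  (exists g : M3 -> M3,
    [/\ forall x, gen Fr162x4 x -> gen D18 (g x),
        forall x y, gen Fr162x4 x -> gen Fr162x4 y -> g (x * y) = g x * g y,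
        forall x y, gen Fr162x4 x -> gen Fr162x4 y -> g x = g y -> x = y,
        forall z, gen D18 z -> exists2 x, gen Fr162x4 x & g x = z
      & [/\ g H3 = Emx ^+ 2, g H1 = Btil * Emx, g C18 = gC18 & g C6 = gC6]])
  /\ gC18 = Fmx ^+ 2 * (Emx ^+ 2 * Fmx * Emx * Fmx^-1) ^+ 3
  /\ gC6 = Emx * gC18 * (Emx ^+ 2)^-1 * gC18 ^+ 8 * (Emx ^+ 2)^-1 * gC18 ^+ 3.
Proof.
split; last by split; [exact: gC18_word | exact: gC6_word].
exists isoD; split.
- exact: isoD_D.
- exact: isoD_M.
- exact: isoD_inj.
- exact: isoD_surj.
- exact: isoD_values.
Qed.
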